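(* Let $G$ be a second countable, locally compact, Hausdorff groupoid with a Haar system, and let $G'$ be an open subgroupoid of $G$ with $G^{0}\subseteq G'$. Let $\Delta=G\setminus G'$ and suppose the inclusion is regular, i.e. the map $r:\Delta\to r(\Delta)$ is open when $r(\Delta)$ is given the quotient topology from $r|_{\Delta}$. Let $\Delta^{2}=(\Delta\times\Delta)\cap G^{2}$ and $\mu:G^{2}\to G$ the product. Then $\Delta^{2}\cap\mu^{-1}(G')$ is closed in $\Delta^{2}$.
   Context: $G^{2}\subseteq G\times G$ denotes the set of composable pairs. *)

From HB Require Import structures.
From mathcomp Require Import all_boot all_order all_algebra.
From mathcomp Require Import all_classical all_reals all_analysis.
Set Implicit Arguments. Unset Strict Implicit. Unset Printing Implicit Defensive.
Import Order.TTheory GRing.Theory Num.Theory.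
Import numFieldNormedType.Exports.
Local Open Scope classical_set_scope.
Local Open Scope ring_scope.

(* Abstract groupoids (Renault's axioms), arrows are the elements of T *)
Record groupoid (T : Type) := Groupoid {
  G2 : set (T * T);
  gmul : T -> T -> T;
  ginv : T -> T;
  gassoc : forall x y z, G2 (x, y) -> G2 (y, z) ->
    G2 (gmul x y, z) /\ G2 (x, gmul y z) /\
    gmul (gmul x y) z = gmul x (gmul y z);
  ginvK : forall x, ginv (ginv x) = x;
  gcomp_inv_r : forall x, G2 (x, ginv x);
  gmulK : forall z x, G2 (z, x) -> gmul (gmul z x) (ginv x) = z;
  gcomp_inv_l : forall x, G2 (ginv x, x);
  gKmul : forall x y, G2 (x, y) -> gmul (ginv x) (gmul x y) = y
}.

Section GroupoidDefs.
Variables (T : Type) (G : groupoid T).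
Definition rng (x : T) : T := gmul G x (ginv G x).
Definition src (x : T) : T := gmul G (ginv G x) x.
Definition unit_space : set T := range rng.
Definition subgroupoid (H : set T) : Prop :=
  (forall x, H x -> H (ginv G x)) /\
  (forall x y, G2 G (x, y) -> H x -> H y -> H (gmul G x y)).
End GroupoidDefs.

Definition open_in {T : topologicalType} (A B : set T) : Prop :=
  exists O, open O /\ B = A `&` O.
Definition closed_in {T : topologicalType} (A B : set T) : Prop :=
  exists C, closed C /\ B = A `&` C.

Definition topological_groupoid {T : topologicalType} (G : groupoid T) : Prop :=
  continuous (ginv G) /\
  {within G2 G, continuous (fun p : T * T => gmul G p.1 p.2)}.

(* Regular inclusion: r : Delta -> r(Delta) is open, r(Delta) carrying the
   quotient topology induced by r restricted to Delta (Delta with subspace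
   topology). A subset W of r(Delta) is open iff Delta `&` r^-1(W) is open
   in Delta. *)
Definition regular_inclusion {T : topologicalType} (G : groupoid T)
  (H : set T) : Prop :=
  let Delta := ~` H in
  forall V, V `<=` Delta -> open_in Delta V ->
    open_in Delta (Delta `&` (rng G) @^-1` ((rng G) @` V)).

Definition borelType (T : ptopologicalType) := g_sigma_algebraType (@open T).

Section Haar.
Variables (R : realType) (T : ptopologicalType).
Local Open Scope ereal_scope.

Definition compactly_supported_continuous (f : T -> R) : Prop :=
  continuous f /\ compact (closure [set x | f x != 0%R]).

Definition radon (mu : {measure set (borelType T) -> \bar R}) : Prop :=
  (forall K : set T, compact K -> mu K < +oo) /\
  (forall A : set (borelType T), measurable A ->
     mu A = ereal_inf [set mu U | U in [set U : set T | open U /\ A `<=` U]]) /\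
  (forall U : set T, open U ->
     mu U = ereal_sup [set mu K | K in [set K : set T | compact K /\ K `<=` U]]).

Definition msupport (mu : {measure set (borelType T) -> \bar R}) : set T :=
  [set x | forall U : set T, open U -> U x -> 0 < mu U].

Definition haar_system (G : groupoid T)
  (lam : T -> {measure set (borelType T) -> \bar R}) : Prop :=
  (forall u, unit_space G u ->
     radon (lam u) /\ msupport (lam u) = [set x | rng G x = u]) /\
  (forall f, compactly_supported_continuous f ->
     {within unit_space G,
       continuous (fun u => fine (\int[lam u]_(x in setT) (f x)%:E))}) /\
  (forall f, compactly_supported_continuous f -> forall x,
     \int[lam (src G x)]_(y in setT) (f (gmul G x y))%:E =
     \int[lam (rng G x)]_(y in setT) (f y)%:E).
End Haar.

From HB Require Import structures.
From mathcomp Require Import all_boot all_order all_algebra.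
From mathcomp Require Import all_classical all_reals all_analysis.
Local Open Scope classical_set_scope.
Local Open Scope ring_scope.
Local Open Scope ereal_scope.

(* Let (x, y) be a limit of pairs (x', y') in Delta^2 with x' y' in G' = H, and
   suppose z = x y lies in Delta.  Since z^-1 z is a unit, continuity of the
   product gives neighbourhoods O of z and B of z with w^-1 v in G' whenever
   w is in O and v in B.  Regularity makes the r-saturation of Delta ∩ O open
   in Delta; it contains x because r(x) = r(z).  Choosing (x', y') with x'
   in that saturation and x' y' in B yields some w in Delta ∩ O with
   r(w) = r(x'), so that w^-1 (x' y') and x' y' both lie in G'.  Hence
   w^-1 lies in G', and so does w: a contradiction. *)

Section GroupoidAlgebra.
Context {T : Type} {G : groupoid T}.
Local Notation "a * b" := (gmul G a b).
Local Notation "a ^-1" := (ginv G a).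

Lemma G2_src_rng {a b} : G2 G (a, b) -> src G a = rng G b.
Proof.
move=> ab.
have [_ [a'ab _]] := gassoc (gcomp_inv_l G a) ab.
have [abb' _] := gassoc ab (gcomp_inv_r G b).
have [_ [_ e]] := gassoc a'ab abb'.
by rewrite gmulK // in e; rewrite /src /rng -e gKmul.
Qed.

Lemma src_rng_G2 {a b} : src G a = rng G b -> G2 G (a, b).
Proof.
move=> e.
have [_ [aa'a _]] := gassoc (gcomp_inv_r G a) (gcomp_inv_l G a).
have srcb : G2 G (src G a, b).
  by rewrite e; have [] := gassoc (gcomp_inv_r G b) (gcomp_inv_l G b).
have [h _] := gassoc aa'a srcb.
suff ea : a * src G a = a by rewrite ea in h.
by have := gKmul (gcomp_inv_l G a); rewrite ginvK.
Qed.

Lemma rng_mul {a b} : G2 G (a, b) -> rng G (a * b) = rng G a.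
Proof.
move=> ab.
have [_ [a'ab _]] := gassoc (gcomp_inv_l G a) ab.
by have := G2_src_rng a'ab; rewrite /src /rng ginvK => <-.
Qed.

Lemma src_unit_space a : unit_space G (src G a).
Proof. by exists a^-1 => //; rewrite /rng /src ginvK. Qed.

Lemma subgroupoid_divr {H : set T} {a b} :
  subgroupoid G H -> G2 G (a, b) -> H (a * b) -> H b -> H a.
Proof.
move=> [Hinv Hmul] ab Hab Hb.
have [abb' _] := gassoc ab (gcomp_inv_r G b).
by rewrite -(gmulK ab); apply: Hmul => //; apply: Hinv.
Qed.

End GroupoidAlgebra.

Lemma within_continuous_nbhs (S U : topologicalType) (A : set S) (f : S -> U)
    p O :
  {within A, continuous f} -> A p -> nbhs (f p) O ->
  nbhs p [set q | A q -> O (f q)].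
Proof. by move=> cf Ap /cf; case: (nbhs_subspaceP A p). Qed.
Arguments within_continuous_nbhs {S U A f p O}.

Lemma nbhs_fst (S U : topologicalType) (x : S) (y : U) O :
  nbhs x O -> nbhs (x, y) [set q | O q.1].
Proof. exact: (@cvg_fst _ _ (nbhs x) (nbhs y)). Qed.
Arguments nbhs_fst {S U x y O}.

Lemma closed_in_closure (T : topologicalType) (A B : set T) :
  B `<=` A -> A `&` closure B `<=` B -> closed_in A B.
Proof.
move=> BA AclB; exists (closure B); split; first exact: closed_closure.
apply/seteqP; split=> [p Bp|p]; last exact: AclB.
by split; [exact: BA | exact: subset_closure].
Qed.

Section RegularInclusion.
Variables (T : topologicalType) (G : groupoid T) (H : set T).
Hypotheses (cG : topological_groupoid G) (oH : open H).
Local Notation "a * b" := (gmul G a b).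
Local Notation "a ^-1" := (ginv G a).

Lemma inv_mul_near_src {z} : H (src G z) ->
  exists O, [/\ open O, O z & exists2 B, nbhs z B &
    forall w v, O w -> B v -> G2 G (w^-1, v) -> H (w^-1 * v)].
Proof.
case: cG => cinv cmul Hsrc.
have /(within_continuous_nbhs cmul (gcomp_inv_l G z)) : nbhs (z^-1 * z) H.
  exact: open_nbhs_nbhs.
case=> -[A1 B1] /= [nA1 nB1] A1B1H.
have : nbhs z (ginv G @^-1` A1) by exact: cinv.
rewrite {1}nbhsE; case=> O1 [oO1 O1z] O1A1.
exists O1; split=> //; exists B1 => // w v O1w B1v wv.
by apply: (A1B1H (w^-1, v)) wv; split=> //; apply: O1A1.
Qed.

Hypotheses (sH : subgroupoid G H) (uH : unit_space G `<=` H)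
  (reg : regular_inclusion G H).

Lemma regular_inclusion_closure_mul x y :
  (~` H) x -> G2 G (x, y) ->
  closure ((~` H) `*` (~` H) `&` G2 G `&` [set p | H (p.1 * p.2)]) (x, y) ->
  H (x * y).
Proof.
move=> Dx xy clxy; apply: contrapT => Dz; set z := x * y in Dz.
have [U [oU Uz [B nB UBH]]] := inv_mul_near_src (uH _ (src_unit_space z)).
have [U' [oU' DU'E]] :=
  reg (~` H `&` U) (@subIsetl _ _ _) (ex_intro _ U (conj oU erefl)).
have U'x : U' x.
  have : (~` H `&` rng G @^-1` (rng G @` (~` H `&` U))) x.
    by split=> //; exists z; [split | exact: rng_mul].
  by rewrite DU'E => -[].
have nxyB : nbhs (x, y) [set q | G2 G q -> B (q.1 * q.2)].
  exact: (within_continuous_nbhs cG.2 xy nB).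
have nxU' : nbhs (x, y) [set q | U' q.1] by apply/nbhs_fst/open_nbhs_nbhs.
have [[x' y'] [[[[/= Dx' _] x'y'] Hx'y'] [/= x'y'B U'x']]] :=
  clxy _ (filterI nxyB nxU').
have : (~` H `&` U') x' by [].
rewrite -DU'E => -[_ [w [Dw Uw] rw]].
have w'x' : G2 G (w^-1, x') by apply: src_rng_G2; rewrite /src ginvK.
have [_ [w'x'y' _]] := gassoc w'x' x'y'.
apply: Dw; rewrite -[w](ginvK G); apply: (proj1 sH).
apply: (subgroupoid_divr sH w'x'y') Hx'y'.
exact: UBH _ _ Uw (x'y'B x'y') w'x'y'.
Qed.

Lemma regular_inclusion_closed_in_mul :
  closed_in ((~` H) `*` (~` H) `&` G2 G)
            ((~` H) `*` (~` H) `&` G2 G `&` [set p | H (p.1 * p.2)]).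
Proof.
apply: closed_in_closure; first exact: subIsetl.
move=> [x y] [[[/= Dx Dy] xy] clxy]; split=> //.
exact: regular_inclusion_closure_mul.
Qed.

End RegularInclusion.

Theorem lemma6p35 (R : realType) (T : ptopologicalType) (G : groupoid T)
  (lam : T -> {measure set (borelType T) -> \bar R}) (H : set T) :
  @second_countable T -> locally_compact [set: T] -> hausdorff_space T ->
  topological_groupoid G -> haar_system G lam ->
  open H -> subgroupoid G H -> unit_space G `<=` H ->
  regular_inclusion G H ->
  closed_in ((~` H) `*` (~` H) `&` G2 G)
            ((~` H) `*` (~` H) `&` G2 G `&` [set p | H (gmul G p.1 p.2)]).
Proof.
move=> _ _ _ cG _ oH sH uH reg.
exact: regular_inclusion_closed_in_mul.
Qed.
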